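(* Let $\mathcal{A}$ be a probabilistic automaton with state set $Q$, and let $(u_n)_{n\in\mathbb{N}}$ and $(v_n)_{n\in\mathbb{N}}$ be sequences of words that reify limit-words $\mathbf{u}$ and $\mathbf{v}$ respectively. Then: (1) the sequence $(u_n\cdot v_n)_{n\in\mathbb{N}}$ reifies $\mathbf{u}\cdot\mathbf{v}$; (2) if $\mathbf{u}$ is idempotent, then there exists an increasing function $f:\mathbb{N}\to\mathbb{N}$ such that for every increasing function $g:\mathbb{N}\to\mathbb{N}$ with $g\ge f$ (pointwise), the sequence $(u_{g(n)}^{\,n})_{n\in\mathbb{N}}$ reifies $\mathbf{u}^\sharp$.
   Context: Fix a finite alphabet $A$. A probabilistic automaton is $\mathcal{A}=(Q,q_0,\Delta,F)$ with $Q$ finite, $q_0\in Q$, $F\subseteq Q$ and $\Delta: Q\times A\to\mathcal{D}(Q)$. For $a\in A$ let $M_a(s,t)=\Delta(s,a)(t)$, for $u=a_0\cdots a_{n-1}$ let $M_u=M_{a_0}\cdots M_{a_{n-1}}$ (identity for the empty word), and $\mathbb{P}_{\mathcal{A}}(s\xrightarrow{u}t)=M_u(s,t)$; $u^n$ denotes $u$ concatenated $n$ times. A limit-word is a map $\mathbf{u}:Q\times Q\to\{0,1\}$ such that every $s$ has some $t$ with $\mathbf{u}(s,t)=1$. Concatenation: $(\mathbf{u}\cdot\mathbf{v})(s,t)=1$ iff there is $q$ with $\mathbf{u}(s,q)=\mathbf{v}(q,t)=1$. $\mathbf{u}$ is idempotent if $\mathbf{u}\cdot\mathbf{u}=\mathbf{u}$;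 for idempotent $\mathbf{u}$, $s$ is $\mathbf{u}$-recurrent if for all $t$, $\mathbf{u}(s,t)=1\Rightarrow\mathbf{u}(t,s)=1$, and $\mathbf{u}^\sharp(s,t)=1$ iff $\mathbf{u}(s,t)=1$ and $t$ is $\mathbf{u}$-recurrent. A sequence of words $(w_n)_{n}$ reifies a limit-word $\mathbf{w}$ if for all states $s,t$ the sequence $\mathbb{P}_{\mathcal{A}}(s\xrightarrow{w_n}t)$ converges and $\mathbf{w}(s,t)=1\iff\lim_n\mathbb{P}_{\mathcal{A}}(s\xrightarrow{w_n}t)>0$. *)

From mathcomp Require Import all_boot all_order all_algebra.
From mathcomp Require Import all_classical all_reals all_analysis.
Set Implicit Arguments. Unset Strict Implicit. Unset Printing Implicit Defensive.
Import Order.TTheory GRing.Theory Num.Theory numFieldNormedType.Exports.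
Local Open Scope ring_scope.

(* A probabilistic automaton over the finite alphabet A with finite state set Q.
   delta a s t = Delta(s,a)(t); each Delta(s,a) is a probability distribution on Q. *)
Record PA (R : realType) (A Q : finType) := MkPA {
  pa_init : Q;
  pa_delta : A -> Q -> Q -> R;
  pa_final : {set Q};
  pa_delta_ge0 : forall a s t, 0 <= pa_delta a s t;
  pa_delta_sum1 : forall a s, \sum_(t : Q) pa_delta a s t = 1
}.

(* M_u(s,t) = P(s --u--> t), with M_{a u} = M_a M_u and M_eps = identity. *)
Fixpoint Mword (R : realType) (A Q : finType) (P : PA R A Q) (u : seq A) (s t : Q) : R :=
  match u with
  | [::] => (s == t)%:R
  | a :: u' => \sum_(q : Q) pa_delta P a s q * Mword P u' q t
  end.

Definition wpow (A : Type) (u : seq A) (n : nat) : seq A := flatten (nseq n u).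

Definition lword (Q : finType) := Q -> Q -> bool.
Definition is_limit_word (Q : finType) (w : lword Q) : Prop :=
  forall s, exists t, w s t.
Definition lw_mul (Q : finType) (u v : lword Q) : lword Q :=
  fun s t => [exists q, u s q && v q t].
Definition lw_idempotent (Q : finType) (u : lword Q) : Prop :=
  forall s t, lw_mul u u s t = u s t.
Definition lw_recurrent (Q : finType) (u : lword Q) (s : Q) : bool :=
  [forall t, u s t ==> u t s].
Definition lw_sharp (Q : finType) (u : lword Q) : lword Q :=
  fun s t => u s t && lw_recurrent u t.

Definition reifies (R : realType) (A Q : finType) (P : PA R A Q)
  (ws : nat -> seq A) (w : lword Q) : Prop :=
  forall s t,
    cvgn (fun n => Mword P (ws n) s t) /\
    (w s t = true <-> 0 < limn (fun n => Mword P (ws n) s t)).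

Definition strictly_increasing (f : nat -> nat) : Prop :=
  forall m n, (m < n)%N -> (f m < f n)%N.

(* Part (1): [M_(u v) = M_u M_v], so the entries of [M_(u_n v_n)] converge to
   [sum_q lim M_(u_n)(s,q) * lim M_(v_n)(q,t)], a sum of nonnegative terms that is
   positive exactly when some [q] has [u(s,q) = v(q,t) = 1].

   Part (2): the limit [L] of [M_(u_n)] is a stochastic matrix whose support is the
   idempotent, hence transitive, limit-word [u]; let [d > 0] be its least positive
   entry. From every state, one step of [L] puts mass at least [d] on recurrent
   states, which are never left, so the transient mass of [L^n] is at most
   [(1 - d)^n]. On a recurrent class [L] is positive, and a Doeblin argument
   shrinks the spread of each column of [L^n] on the class by [1 - d] per step.
   Hence [L^n] converges, with [lim L^n (s,t) >= d^2] if [u^#(s,t) = 1] and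
   [lim L^n (s,t) = 0] otherwise. Finally, for stochastic matrices
   [|A^n - L^n| <= n |A - L|] in the row norm, so choosing [f n] with
   [|M_(u_m) - L| <= 1/(n+1)^2] for [m >= f n] gives [M_(u_(g n))^n - L^n -> 0]. *)

From mathcomp Require Import all_boot all_order all_algebra.
From mathcomp Require Import all_classical all_reals all_analysis.
From mathcomp Require Import ring lra zify.
Set Implicit Arguments. Unset Strict Implicit. Unset Printing Implicit Defensive.
Import Order.TTheory GRing.Theory Num.Theory numFieldNormedType.Exports.
Local Open Scope classical_set_scope.
Local Open Scope ring_scope.

Section StochasticMatrices.
Variables (R : realType) (Q : finType).
Implicit Types (X Y Z : Q -> Q -> R) (s t q r : Q).

Definition mmul X Y : Q -> Q -> R := fun s t => \sum_q X s q * Y q t.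
Definition mid : Q -> Q -> R := fun s t => (s == t)%:R.
Fixpoint mpow X n : Q -> Q -> R := if n is n'.+1 then mmul X (mpow X n') else mid.

Lemma mmulA X Y Z : mmul X (mmul Y Z) = mmul (mmul X Y) Z.
Proof.
apply/funext => s; apply/funext => t; rewrite /mmul.
under eq_bigr do rewrite big_distrr /=.
rewrite exchange_big; apply: eq_bigr => r _; rewrite big_distrl /=.
by apply: eq_bigr => q _; rewrite mulrA.
Qed.

Lemma mmul1l X : mmul mid X = X.
Proof.
apply/funext => s; apply/funext => t; rewrite /mmul /mid.
rewrite (bigD1 s) //= eqxx mul1r big1 ?addr0 // => q /negbTE.
by rewrite eq_sym => ->; rewrite mul0r.
Qed.

Lemma mmul1r X : mmul X mid = X.
Proof.
apply/funext => s; apply/funext => t; rewrite /mmul /mid.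
rewrite (bigD1 t) //= eqxx mulr1 big1 ?addr0 // => q /negbTE ->.
by rewrite mulr0.
Qed.

Lemma mpowD X m n : mpow X (m + n) = mmul (mpow X m) (mpow X n).
Proof.
elim: m => [|m IHm]; first by rewrite add0n mmul1l.
by rewrite addSn /= IHm mmulA.
Qed.

Lemma mpowSr X n : mpow X n.+1 = mmul (mpow X n) X.
Proof. by rewrite -addn1 mpowD /= mmul1r. Qed.

Definition stochastic X := (forall s t, 0 <= X s t) /\ (forall s, \sum_t X s t = 1).

Lemma stochastic_mid : stochastic mid.
Proof.
split => [s t|s]; first by rewrite /mid ler0n.
rewrite /mid (bigD1 s) //= eqxx big1 ?addr0 // => q /negbTE.
by rewrite eq_sym => ->.
Qed.

Lemma stochastic_mmul X Y : stochastic X -> stochastic Y -> stochastic (mmul X Y).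
Proof.
move=> [X_ge0 X_sum1] [Y_ge0 Y_sum1]; split => [s t|s].
  by apply: sumr_ge0 => q _; apply: mulr_ge0.
rewrite /mmul exchange_big /=.
under eq_bigr do rewrite -big_distrr /= Y_sum1 mulr1.
exact: X_sum1.
Qed.

Lemma stochastic_mpow X n : stochastic X -> stochastic (mpow X n).
Proof.
move=> SX; elim: n => [|n IHn] /=; first exact: stochastic_mid.
exact: stochastic_mmul.
Qed.

Lemma stochastic_sum_le1 X (p : pred Q) s :
  stochastic X -> \sum_(q | p q) X s q <= 1.
Proof.
move=> [X_ge0 X_sum1]; rewrite -(X_sum1 s) [leRHS](bigID p) /= lerDl.
exact: sumr_ge0.
Qed.

Lemma stochastic_le1 X s t : stochastic X -> X s t <= 1.
Proof. by move=> /(stochastic_sum_le1 (pred1 t) s); rewrite big_pred1_eq. Qed.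

Lemma stochastic_dist_le1 X Y s t :
  stochastic X -> stochastic Y -> `|X s t - Y s t| <= 1.
Proof.
move=> SX SY; have := stochastic_le1 s t SX; have := stochastic_le1 s t SY.
have := SX.1 s t; have := SY.1 s t; rewrite ler_norml => *; apply/andP; split; lra.
Qed.

(* Each step of the telescoping [A^(n+1) - L^(n+1) = A (A^n - L^n) + (A - L) L^n]
   loses at most the row distance between [A] and [L]. *)
Lemma mpow_dist_le X Y e :
  stochastic X -> stochastic Y -> (forall s, \sum_t `|X s t - Y s t| <= e) ->
  forall n s, \sum_t `|mpow X n s t - mpow Y n s t| <= n%:R * e.
Proof.
move=> [X_ge0 X_sum1] SY dXY; elim=> [|n IHn] s.
  by rewrite mul0r big1 // => t _; rewrite subrr normr0.
have SYn := stochastic_mpow n SY.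
have split_diff t : mpow X n.+1 s t - mpow Y n.+1 s t =
    \sum_q (X s q * (mpow X n q t - mpow Y n q t) + (X s q - Y s q) * mpow Y n q t).
  by rewrite /= /mmul -sumrB; apply: eq_bigr => q _; ring.
under eq_bigr do rewrite split_diff.
apply: le_trans (_ : \sum_t \sum_q (X s q * `|mpow X n q t - mpow Y n q t|
    + `|X s q - Y s q| * mpow Y n q t) <= _).
  apply: ler_sum => t _; apply: le_trans (ler_norm_sum _ _ _) _.
  apply: ler_sum => q _; apply: le_trans (ler_normD _ _) _.
  by rewrite !normrM (ger0_norm (X_ge0 _ _)) (ger0_norm (SYn.1 _ _)).
rewrite exchange_big /=.
under eq_bigr do rewrite big_split /= -!big_distrr /= SYn.2 mulr1.
rewrite big_split /= -addn1 natrD mulrDl mul1r; apply: lerD; last exact: dXY.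
apply: le_trans (_ : \sum_q X s q * (n%:R * e) <= _).
  by apply: ler_sum => q _; apply: ler_wpM2l; [exact: X_ge0 | exact: IHn].
by rewrite -big_distrl /= X_sum1 mul1r.
Qed.

Lemma convex_comb_bounds (c y : Q -> R) lo hi :
  (forall r, 0 <= c r) -> (forall r, c r != 0 -> lo <= y r <= hi) ->
  (\sum_r c r) * lo <= \sum_r c r * y r <= (\sum_r c r) * hi.
Proof.
move=> c_ge0 y_in; rewrite !big_distrl /=; apply/andP; split; apply: ler_sum => r _;
  (have [->|c_neq0] := eqVneq (c r) 0; first by rewrite !mul0r);
  have /andP [y_ge y_le] := y_in r c_neq0;
  by apply: ler_wpM2l.
Qed.

End StochasticMatrices.

Arguments mid {R Q}.

Section WordMatrices.
Variables (R : realType) (A Q : finType) (P : PA R A Q).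

Lemma Mword_cat (w w' : seq A) : Mword P (w ++ w') = mmul (Mword P w) (Mword P w').
Proof.
elim: w => [|a w IHw]; first by rewrite /= mmul1l.
change (mmul (pa_delta P a) (Mword P (w ++ w')) =
  mmul (mmul (pa_delta P a) (Mword P w)) (Mword P w')).
by rewrite IHw mmulA.
Qed.

Lemma Mword_wpow (w : seq A) n : Mword P (wpow w n) = mpow (Mword P w) n.
Proof. by elim: n => [|n IHn] //=; rewrite /wpow /= Mword_cat -IHn. Qed.

Lemma stochastic_Mword (w : seq A) : stochastic (Mword P w).
Proof.
elim: w => [|a w IHw]; first exact: stochastic_mid.
apply: (@stochastic_mmul _ _ (pa_delta P a)) => //.
by split; [exact: pa_delta_ge0 | exact: pa_delta_sum1].
Qed.

End WordMatrices.

Section SequenceFacts.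
Variable R : realType.

Lemma cvgn_sum (I : finType) (F : I -> nat -> R) (l : I -> R) :
  (forall i, F i n @[n --> \oo] --> l i) -> \sum_i F i n @[n --> \oo] --> \sum_i l i.
Proof. by move=> F_cvg; apply: cvg_big => //; exact: add_continuous. Qed.

Lemma limn_ge0 (x : nat -> R) : cvgn x -> (forall n, 0 <= x n) -> 0 <= limn x.
Proof. by move=> x_cvg x_ge0; apply: limr_ge => //; exact: nearW. Qed.

Lemma near_infty_ex (p : nat -> Prop) :
  (\forall n \near \oo, p n) -> exists N, forall n, (N <= n)%N -> p n.
Proof. by case=> N _ pN; exists N. Qed.

Lemma exists_exprS_lt (z e : R) : 0 <= z < 1 -> 0 < e -> exists b, z ^+ b.+1 < e.
Proof.
move=> /andP [z_ge0 z_lt1] e_gt0.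
have z_norm : `|z| < 1 by rewrite ger0_norm.
have /cvgr_dist_lt /(_ e e_gt0) /near_infty_ex [N zN] := cvg_expr z_norm.
exists N; have := zN N.+1 (leqnSn N); rewrite sub0r normrN ger0_norm //.
exact: exprn_ge0.
Qed.

Lemma cvgn_anchored_cauchy (x : nat -> R) :
  (forall e, 0 < e -> exists N, forall m, (N <= m)%N -> `|x N - x m| < e) -> cvgn x.
Proof.
move=> x_cauchy; apply: cauchy_cvg; apply: cauchy_exP => e e_gt0.
rewrite /fmapE -ball_normE /ball_.
have [N xN] := x_cauchy e e_gt0.
by exists (x N), N => // m Nm; exact: xN.
Qed.

Lemma psumr_mul_gt0P (I : finType) (a b : I -> R) :
  (forall i, 0 <= a i) -> (forall i, 0 <= b i) ->
  (0 < \sum_i a i * b i) <-> (exists i, 0 < a i /\ 0 < b i).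
Proof.
move=> a_ge0 b_ge0; have ab_ge0 i : 0 <= a i * b i by exact: mulr_ge0.
rewrite lt_def psumr_neq0 ?sumr_ge0 // andbT; split.
  move=> /hasP [i _ /= ab_gt0]; exists i.
  by move: ab_gt0; rewrite !lt_def mulf_eq0 negb_or a_ge0 b_ge0 => /andP [/andP [-> ->] _].
move=> [i [a_gt0 b_gt0]]; apply/hasP; exists i; first by rewrite mem_index_enum.
exact: mulr_gt0.
Qed.

Lemma exists_uniform_lb (I : finType) (p : pred I) (F : I -> R) :
  (forall i, p i -> 0 < F i) -> exists d, [/\ 0 < d, d <= 1 & forall i, p i -> d <= F i].
Proof.
move=> F_gt0; exists (\big[Num.min/1]_(i | p i) F i); split.
- apply: (big_ind (fun x => 0 < x)) => // x y x_gt0 y_gt0.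
  by rewrite lt_min x_gt0.
- by apply: (big_rec (fun x => x <= 1)) => // i x _ x_le1; rewrite ge_min x_le1 orbT.
- by move=> i pi; rewrite (bigD1 i) //= ge_min lexx.
Qed.

End SequenceFacts.

Lemma exists_rate_index (R : realType) (D : nat -> R) :
  D m @[m --> \oo] --> 0 -> exists f : nat -> nat, strictly_increasing f /\
    forall n m, (f n <= m)%N -> `|D m| <= ((n.+1)%:R ^+ 2)^-1.
Proof.
move=> D_cvg0.
have N_ex n : exists N, forall m, (N <= m)%N -> `|D m| <= ((n.+1)%:R ^+ 2)^-1.
  have e_gt0 : 0 < ((n.+1)%:R ^+ 2)^-1 :> R by rewrite invr_gt0 exprn_gt0 // ltr0Sn.
  have /cvgr_dist_lt /(_ _ e_gt0) /near_infty_ex [N DN] := D_cvg0.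
  by exists N => m /DN; rewrite sub0r normrN => /ltW.
have [N N_rate] := choice N_ex.
(* Adding up the thresholds makes the index function strictly increasing. *)
pose f n := (\sum_(k < n.+1) N k + n)%N.
have N_le_f n : (N n <= f n)%N by rewrite /f big_ord_recr /=; lia.
exists f; split=> [|n m fm]; last exact/N_rate/(leq_trans (N_le_f n)).
move=> m n; apply: (@homo_ltn _ f (fun a b => (a < b)%N)) => [a b c|i].
  exact: ltn_trans.
by rewrite /f (big_ord_recr i.+1) /=; lia.
Qed.

Section Reification.
Variables (R : realType) (A Q : finType) (P : PA R A Q).

Definition Mlim (ws : nat -> seq A) : Q -> Q -> R :=
  fun s t => limn (fun n => Mword P (ws n) s t).

Lemma Mlim_ge0 ws w s t : reifies P ws w -> 0 <= Mlim ws s t.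
Proof.
move=> ws_reif; apply: limn_ge0; first exact: (ws_reif s t).1.
by move=> n; exact: (stochastic_Mword P _).1.
Qed.

Lemma reifies_cat (us vs : nat -> seq A) (u v : lword Q) :
  reifies P us u -> reifies P vs v -> reifies P (fun n => us n ++ vs n) (lw_mul u v).
Proof.
move=> us_reif vs_reif s t.
have uv_cvg : (fun n => Mword P (us n ++ vs n) s t) @ \oo -->
    \sum_q Mlim us s q * Mlim vs q t.
  under eq_fun do rewrite Mword_cat /mmul.
  apply: cvgn_sum => q; apply: cvgM; [exact: (us_reif s q).1 | exact: (vs_reif q t).1].
split; first by apply/cvg_ex; eexists; exact: uv_cvg.
rewrite (cvg_lim _ uv_cvg) // psumr_mul_gt0P => [|q|q]; last 2 first.
- exact: Mlim_ge0 us_reif.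
- exact: Mlim_ge0 vs_reif.
split=> [/existsP [q /andP [usq vqt]]|[q [usq vqt]]].
  by exists q; split; [apply/(us_reif s q).2 | apply/(vs_reif q t).2].
by apply/existsP; exists q; apply/andP; split; [apply/(us_reif s q).2 | apply/(vs_reif q t).2].
Qed.

Lemma stochastic_Mlim ws w : reifies P ws w -> stochastic (Mlim ws).
Proof.
move=> ws_reif; split=> [s t|s]; first exact: Mlim_ge0 ws_reif.
have := cvgn_sum (fun t => (ws_reif s t).1).
under eq_fun do rewrite (stochastic_Mword P _).2.
by move=> /cvg_lim <-//; rewrite lim_cst.
Qed.

End Reification.

Lemma lw_idempotent_trans (Q : finType) (u : lword Q) :
  lw_idempotent u -> forall s q t, u s q -> u q t -> u s t.
Proof. by move=> u_idem s q t usq uqt; rewrite -u_idem; apply/existsP; exists q; apply/andP. Qed.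

Section TransitiveLimitWords.
Variables (Q : finType) (u : lword Q).
Hypotheses (u_trans : forall s q t, u s q -> u q t -> u s t) (u_total : is_limit_word u).

Lemma lw_recurrentP r t : lw_recurrent u r -> u r t -> u t r.
Proof. by move=> /forallP /(_ t) /implyP. Qed.

Lemma lw_recurrent_succ q t : lw_recurrent u q -> u q t -> lw_recurrent u t.
Proof.
move=> q_rec uqt; apply/forallP => r; apply/implyP => utr.
exact: u_trans (lw_recurrentP q_rec (u_trans uqt utr)) uqt.
Qed.

Lemma lw_recurrent_refl t : lw_recurrent u t -> u t t.
Proof. by move=> t_rec; have [r utr] := u_total t; exact: u_trans utr (lw_recurrentP t_rec utr). Qed.

(* A successor [t] of [s] with fewest successors has the same successors as
   each of its own successors, so every successor of [t] is recurrent. *)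
Lemma exists_recurrent_succ s : exists r, u s r /\ lw_recurrent u r.
Proof.
have [t0 ust0] := u_total s.
pose succ t : {set Q} := finset (u t).
have [t ust t_min] := arg_minnP (fun t => #|succ t|) ust0.
have succ_eq y : u t y -> succ y = succ t.
  move=> uty; apply/eqP; rewrite eqEcard; apply/andP; split.
    by apply/fintype.subsetP => r; rewrite !inE; exact: u_trans.
  exact/t_min/(u_trans ust uty).
have [q utq] := u_total t.
exists q; split; first exact: u_trans ust utq.
apply/forallP => r; apply/implyP => uqr.
have : r \in succ t by rewrite -(succ_eq q utq) inE.
rewrite inE => utr.
have : q \in succ r by rewrite (succ_eq r utr) inE.
by rewrite inE.
Qed.

Section LimitPowers.
Variables (R : realType) (L : Q -> Q -> R) (d : R).
Hypotheses (L_stoch : stochastic L) (u_supp : forall s t, u s t = (0 < L s t)).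
Hypotheses (d_gt0 : 0 < d) (d_le1 : d <= 1) (d_le : forall s t, u s t -> d <= L s t).

Lemma contraction_factor : 0 <= 1 - d < 1.
Proof. by rewrite subr_ge0 d_le1 ltrBlDr ltrDl. Qed.

Lemma L_neq0 s t : L s t != 0 -> u s t.
Proof. by rewrite u_supp lt_def eq_sym => ->; rewrite L_stoch.1. Qed.

Lemma mpowS_support k q r : mpow L k.+1 q r != 0 -> u q r.
Proof.
elim: k q r => [|k IHk] q r; first by rewrite /= mmul1r; exact: L_neq0.
rewrite [mpow _ _]/= /mmul => /eqP /psumr_neq0P [|x /andP [_]].
  by move=> x _; apply: mulr_ge0; [exact: L_stoch.1 | exact: (stochastic_mpow k.+1 L_stoch).1].
rewrite lt_def mulf_eq0 negb_or => /andP [/andP [Lqx_neq0 Lkxr_neq0] _].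
exact: u_trans (L_neq0 Lqx_neq0) (IHk _ _ Lkxr_neq0).
Qed.

Lemma mpow_support k q r : mpow L k q r != 0 -> q = r \/ u q r.
Proof.
case: k => [|k /mpowS_support]; last by right.
by rewrite /= /mid; have [->|_] := eqVneq q r; [left | rewrite eqxx].
Qed.

Lemma mpowS_eq0 k q r : ~~ u q r -> mpow L k.+1 q r = 0.
Proof. by move=> nuqr; apply/eqP; apply: contraR nuqr; exact: mpowS_support. Qed.

Lemma d_le_mass_recurrent r : d <= \sum_(q | lw_recurrent u q) L r q.
Proof.
have [r' [urr' r'_rec]] := exists_recurrent_succ r.
rewrite (bigD1 r') //=; apply: le_trans (d_le urr') _; rewrite lerDl.
by apply: sumr_ge0 => q _; exact: L_stoch.1.
Qed.

Lemma row_transient_mass_le r :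
  \sum_(q | ~~ lw_recurrent u q) L r q <= (if lw_recurrent u r then 0 else 1 - d).
Proof.
case: ifPn => [r_rec|_].
  rewrite big1 // => q; apply: contraNeq => /L_neq0 urq.
  exact: lw_recurrent_succ r_rec urq.
have := L_stoch.2 r; rewrite (bigID (lw_recurrent u)) /=.
have := d_le_mass_recurrent r; lra.
Qed.

Lemma transient_mass_le n s :
  \sum_(q | ~~ lw_recurrent u q) mpow L n s q <= (1 - d) ^+ n.
Proof.
elim: n s => [|n IHn] s; first by rewrite expr0; apply: stochastic_sum_le1; exact: stochastic_mid.
under eq_bigr do rewrite mpowSr /mmul.
rewrite exchange_big /=.
under eq_bigr do rewrite -big_distrr /=.
apply: le_trans (_ : \sum_r mpow L n s r * (if lw_recurrent u r then 0 else 1 - d) <= _).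
  apply: ler_sum => r _; apply: ler_wpM2l; first exact: (stochastic_mpow n L_stoch).1.
  exact: row_transient_mass_le.
rewrite [leLHS](bigID (lw_recurrent u)) /= big1 => [|r ->]; last by rewrite mulr0.
under eq_bigr => r /negbTE -> do rewrite mulrC.
by rewrite add0r -big_distrr exprS /= ler_wpM2l ?subr_ge0.
Qed.

(* Doeblin's argument: on the class of [t], every row of [L] puts mass at least
   [d] on [t] itself, so each further step shrinks the spread of column [t] by
   the factor [1 - d]. *)
Lemma recurrent_column_spread n t : lw_recurrent u t -> exists2 lo, d <= lo &
  forall q, u t q -> lo <= mpow L n.+1 q t <= lo + (1 - d) ^+ n.+1.
Proof.
move=> t_rec; have utt := lw_recurrent_refl t_rec.
elim: n => [|n [lo d_le_lo IHn]].
  exists d => // q utq; rewrite /= mmul1r expr1 d_le ?(lw_recurrentP t_rec) //=.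
  have := stochastic_le1 q t L_stoch; lra.
pose y r := mpow L n.+1 r t.
have /andP [lo_le_yt _] := IHn t utt.
exists (d * y t + (1 - d) * lo).
  have : 0 <= d * (y t - lo) by rewrite mulr_ge0 ?subr_ge0 // ltW.
  nra.
move=> q utq; pose c r := L q r - d * (r == t)%:R.
have c_ge0 r : 0 <= c r.
  rewrite /c; have [->|_] := eqVneq r t; last by rewrite mulr0 subr0 L_stoch.1.
  by rewrite mulr1 subr_ge0 d_le ?(lw_recurrentP t_rec).
have c_sum : \sum_r c r = 1 - d.
  rewrite sumrB -big_distrr L_stoch.2 /= (bigD1 t) //= eqxx big1 ?addr0 ?mulr1 //.
  by move=> r /negbTE ->.
have y_in r : c r != 0 -> lo <= y r <= lo + (1 - d) ^+ n.+1.
  rewrite /c; have [-> _|_] := eqVneq r t; first exact: IHn.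
  by rewrite mulr0 subr0 => /L_neq0 uqr; apply/IHn/(u_trans utq).
have Lq_split : mpow L n.+2 q t = d * y t + \sum_r c r * y r.
  change (\sum_r L q r * y r = d * y t + \sum_r c r * y r).
  rewrite (bigD1 t) //= [in RHS](bigD1 t) //= /c eqxx mulr1.
  have -> : \sum_(r | r != t) (L q r - d * (r == t)%:R) * y r =
      \sum_(r | r != t) L q r * y r.
    by apply: eq_bigr => r /negbTE ->; rewrite mulr0 subr0.
  ring.
rewrite Lq_split exprS; have := convex_comb_bounds c_ge0 y_in; rewrite c_sum.
move=> /andP [? ?]; apply/andP; split; lra.
Qed.

Lemma recurrent_mpow_cauchy k b q t : lw_recurrent u q ->
  `|mpow L (k + b.+1) q t - mpow L b.+1 q t| <= (1 - d) ^+ b.+1.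
Proof.
move=> q_rec; have [uqt|nuqt] := boolP (u q t); last first.
  by rewrite addnS !mpowS_eq0 // subrr normr0 exprn_ge0 // subr_ge0.
have t_rec := lw_recurrent_succ q_rec uqt.
have utq := lw_recurrentP q_rec uqt.
have [lo _ col_t] := recurrent_column_spread b t_rec.
have Lk_stoch := stochastic_mpow k L_stoch.
have y_in r : mpow L k q r != 0 -> lo <= mpow L b.+1 r t <= lo + (1 - d) ^+ b.+1.
  by move=> /mpow_support [<-|uqr]; apply: col_t => //; exact: u_trans utq uqr.
have := convex_comb_bounds (Lk_stoch.1 q) y_in.
rewrite Lk_stoch.2 !mul1r -[\sum_r _]/(mmul _ _ q t) -mpowD => /andP [? ?].
have /andP [? ?] := col_t q utq.
rewrite ler_norml; apply/andP; split; lra.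
Qed.

(* Starting from [s], after [a] steps the mass is on recurrent states, where
   powers are Cauchy, up to the transient mass [(1 - d) ^+ a]. *)
Lemma mpow_cauchy a b k s t :
  `|mpow L (a + (k + b.+1)) s t - mpow L (a + b.+1) s t| <= (1 - d) ^+ b.+1 + (1 - d) ^+ a.
Proof.
have [La_ge0 La_sum1] := stochastic_mpow a L_stoch.
rewrite [mpow L (a + _)]mpowD [mpow L (a + _)]mpowD /mmul -sumrB.
under eq_bigr do rewrite -mulrBr.
apply: le_trans (ler_norm_sum _ _ _) _.
under eq_bigr do rewrite normrM (ger0_norm (La_ge0 _ _)).
rewrite (bigID (lw_recurrent u)) /=; apply: lerD.
  apply: le_trans (_ : \sum_(r | lw_recurrent u r) mpow L a s r * (1 - d) ^+ b.+1 <= _).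
    apply: ler_sum => r r_rec; apply: ler_wpM2l; first exact: La_ge0.
    exact: recurrent_mpow_cauchy.
  rewrite -big_distrl /= ler_piMl ?exprn_ge0 ?subr_ge0 //.
  exact: stochastic_sum_le1 (stochastic_mpow a L_stoch).
apply: le_trans (transient_mass_le a s); apply: ler_sum => r _.
rewrite ler_piMr ?La_ge0 //.
exact: stochastic_dist_le1 (stochastic_mpow (k + b.+1) L_stoch) (stochastic_mpow b.+1 L_stoch).
Qed.

Lemma cvgn_mpow s t : cvgn (fun n => mpow L n s t).
Proof.
apply: cvgn_anchored_cauchy => e e_gt0.
have [b b_small] : exists b, (1 - d) ^+ b.+1 < e / 2.
  by apply: exists_exprS_lt; [exact: contraction_factor | rewrite divr_gt0].
exists (b.+1 + b.+1)%N => m le_m.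
have -> : m = (b.+1 + ((m - (b.+1 + b.+1)) + b.+1))%N by lia.
rewrite distrC; apply: le_lt_trans (mpow_cauchy _ _ _ s t) _; lra.
Qed.

Lemma mpow_sharp_ge n s t : lw_sharp u s t -> d * d <= mpow L n.+2 s t.
Proof.
move=> /andP [ust t_rec]; have [lo d_le_lo col_t] := recurrent_column_spread n t_rec.
have /andP [lo_le _] := col_t t (lw_recurrent_refl t_rec).
change (d * d <= \sum_r L s r * mpow L n.+1 r t).
rewrite (bigD1 t) //=; apply: le_trans (_ : L s t * mpow L n.+1 t t <= _).
  by rewrite ler_pM ?(ltW d_gt0) ?d_le ?(le_trans d_le_lo).
rewrite lerDl; apply: sumr_ge0 => r _; apply: mulr_ge0; first exact: L_stoch.1.
exact: (stochastic_mpow n.+1 L_stoch).1.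
Qed.

Lemma mpow_not_sharp_le n s t : ~~ lw_sharp u s t -> mpow L n.+1 s t <= (1 - d) ^+ n.+1.
Proof.
rewrite negb_and => /orP [nust|t_trans].
  by rewrite mpowS_eq0 // exprn_ge0 // subr_ge0.
apply: le_trans (transient_mass_le n.+1 s); rewrite (bigD1 t) //= lerDl.
by apply: sumr_ge0 => r _; exact: (stochastic_mpow n.+1 L_stoch).1.
Qed.

Lemma lim_mpow_sharp s t : cvgn (fun n => mpow L n s t) /\
  (lw_sharp u s t <-> 0 < limn (fun n => mpow L n s t)).
Proof.
split; first exact: cvgn_mpow.
have [st_sharp|st_not_sharp] := boolP (lw_sharp u s t).
  split=> // _; apply: (@lt_le_trans _ _ (d * d)); first exact: mulr_gt0.
  apply: limr_ge; first exact: cvgn_mpow.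
  exists 2%N => // n /= le2n; rewrite -(subnK le2n) addn2.
  exact: mpow_sharp_ge.
split=> // lim_gt0; exfalso.
have [b b_small] := exists_exprS_lt contraction_factor lim_gt0.
have : limn (fun n => mpow L n s t) <= (1 - d) ^+ b.+1.
  apply: limr_le; first exact: cvgn_mpow.
  exists b.+1 => // n /= le_bn; rewrite -(subnK le_bn) addnS.
  apply: le_trans (mpow_not_sharp_le _ st_not_sharp) _.
  have /andP [d'_ge0 /ltW d'_le1] := contraction_factor.
  by apply: ler_wiXn2l; rewrite // ltnS leq_addl.
by rewrite leNgt b_small.
Qed.

End LimitPowers.

End TransitiveLimitWords.

Lemma n_div_sqrS_le_harmonic (R : realType) n :
  n%:R * ((n.+1)%:R ^+ 2)^-1 <= harmonic n :> R.
Proof.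
have n_gt0 : (0 : R) < n.+1%:R by rewrite ltr0Sn.
rewrite /harmonic /= expr2 invfM mulrA ler_piMl ?invr_ge0 ?ltW //.
by rewrite ltr_pdivrMr // mul1r ltr_nat.
Qed.

Section ReifiedPowers.
Variables (R : realType) (A Q : finType) (P : PA R A Q) (us : nat -> seq A) (u : lword Q).
Hypotheses (u_total : is_limit_word u) (u_idem : lw_idempotent u).
Hypothesis us_reif : reifies P us u.

Let L := Mlim P us.
Let L_stoch : stochastic L := stochastic_Mlim us_reif.

Lemma Mlim_support s t : u s t = (0 < L s t).
Proof. by apply/idP/idP => /(us_reif s t).2. Qed.

Lemma lim_mpow_Mlim_sharp s t : cvgn (fun n => mpow L n s t) /\
  (lw_sharp u s t <-> 0 < limn (fun n => mpow L n s t)).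
Proof.
have [|d [d_gt0 d_le1 d_le]] := @exists_uniform_lb R _ (fun st : Q * Q => u st.1 st.2)
  (fun st => L st.1 st.2).
  by move=> [s' t'] /=; rewrite Mlim_support.
apply: (lim_mpow_sharp (lw_idempotent_trans u_idem) u_total L_stoch Mlim_support d_gt0 d_le1).
by move=> s' t'; exact: (d_le (s', t')).
Qed.

Definition Mlim_dist m := \sum_s \sum_t `|Mword P (us m) s t - L s t|.

Lemma Mlim_dist_cvg0 : Mlim_dist m @[m --> \oo] --> 0.
Proof.
have -> : 0 = \sum_(s : Q) \sum_(t : Q) `|L s t - L s t| :> R.
  by rewrite big1 // => s _; rewrite big1 // => t _; rewrite subrr normr0.
apply: cvgn_sum => s; apply: cvgn_sum => t; apply: cvg_norm.
exact: cvgB (us_reif s t).1 (cvg_cst (L s t)).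
Qed.

Lemma Mword_wpow_dist_le m n s t :
  Mlim_dist m <= ((n.+1)%:R ^+ 2)^-1 ->
  `|Mword P (wpow (us m) n) s t - mpow L n s t| <= harmonic n.
Proof.
move=> dist_le; have row_le s' : \sum_t `|Mword P (us m) s' t - L s' t| <= ((n.+1)%:R ^+ 2)^-1.
  apply: le_trans _ dist_le; rewrite /Mlim_dist [leRHS](bigD1 s') //= lerDl.
  by apply: sumr_ge0 => r _; exact: sumr_ge0.
rewrite Mword_wpow; apply: le_trans _ (n_div_sqrS_le_harmonic R n).
apply: le_trans _ (mpow_dist_le (stochastic_Mword P (us m)) L_stoch row_le n s).
by rewrite [leRHS](bigD1 t) //= lerDl; apply: sumr_ge0.
Qed.

Lemma reifies_wpow_sharp : exists f : nat -> nat, strictly_increasing f /\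
  forall g : nat -> nat, (forall n, (f n <= g n)%N) ->
    reifies P (fun n => wpow (us (g n)) n) (lw_sharp u).
Proof.
have [f [f_incr f_rate]] := exists_rate_index Mlim_dist_cvg0.
exists f; split=> // g g_ge_f s t.
have [Lpow_cvg Lpow_sharp] := lim_mpow_Mlim_sharp s t.
have x_cvg : Mword P (wpow (us (g n)) n) s t @[n --> \oo] --> limn (fun n => mpow L n s t).
  apply: cvg_sub0 Lpow_cvg; apply: norm_cvg0.
  apply: (@squeeze_cvgr _ _ _ _ (fun _ => 0) harmonic); last exact: cvg_harmonic.
    apply: nearW => n /=; rewrite normr_ge0 Mword_wpow_dist_le //.
    exact: le_trans (ler_norm _) (f_rate n _ (g_ge_f n)).
  exact: cvg_cst.
split; first exact: cvgP x_cvg.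
by rewrite (cvg_lim _ x_cvg).
Qed.

End ReifiedPowers.

Theorem proposition2p11 (R : realType) (A Q : finType) (P : PA R A Q)
  (us vs : nat -> seq A) (u v : lword Q) :
  is_limit_word u -> is_limit_word v ->
  reifies P us u -> reifies P vs v ->
  reifies P (fun n => us n ++ vs n) (lw_mul u v) /\
  (lw_idempotent u ->
   exists f : nat -> nat, strictly_increasing f /\
     forall g : nat -> nat, strictly_increasing g -> (forall n, (f n <= g n)%N) ->
       reifies P (fun n => wpow (us (g n)) n) (lw_sharp u)).
Proof.
move=> u_total _ us_reif vs_reif; split; first exact: reifies_cat.
move=> u_idem; have [f [f_incr f_sharp]] := reifies_wpow_sharp u_total u_idem us_reif.
by exists f; split=> // g _; exact: f_sharp.
Qed.
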